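(* There is an absolute constant $C>0$ such that the following holds. Let $\varepsilon\in(0,1)$, let $f:\mathbb R\to\mathbb R$ be $1$-smooth with $f\ge0$, and let $x_0\in\mathbb R$ satisfy $f(x_0)\le1$ and $f'(x_0)\le-\varepsilon$. Then DecreaseGap$(x_0)$ terminates using at most $C(1+\log(1/\varepsilon))$ oracle queries, and either it returns (''stationary'', $z$) where $z$ is an $\varepsilon$-stationary point of $f$, or it returns (''base'', $x$) where $f(x)\le f(x_0)$, $f'(x)\le-\varepsilon$ and $f(x+2/\varepsilon)\ge\frac34 f(x)$.
   Context: $f:\mathbb R\to\mathbb R$ is $1$-smooth if it is continuously differentiable and $f'$ is $1$-Lipschitz; $x$ is an $\varepsilon$-stationary point if $|f'(x)|<\varepsilon$. The oracle returns $(f(x),f'(x))$ on query $x$; values at already-queried points are reused. Subroutines (a recursive call's output is returned unchanged): BinarySearch$(x_0,x_1)$: $m=(x_0+x_1)/2$; if $|f'(m)|<\varepsilon$ return $m$; if $f'(m)\le-\varepsilon$ return BinarySearch$(m,x_1)$; if $f'(m)>0$ return BinarySearch$(x_0,m)$. DecreaseGap$(x_0)$: let $y=x_0+2/\varepsilon$; if $|f'(y)|<\varepsilon$ return (''stationary'', $y$); else if $f'(y)>0$ return (''stationary'', BinarySearch$(x_0,y)$); else if $f(y)\ge\frac34 f(x_0)$ return (''base'', $x_0$); else return DecreaseGap$(y)$. *)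

From Stdlib Require Import Reals Lra List.
Open Scope R_scope.

Definition one_smooth (f f' : R -> R) : Prop :=
  (forall x, derivable_pt_lim f x (f' x)) /\
  (forall x y, Rabs (f' x - f' y) <= Rabs (x - y)).

Inductive outcome : Type :=
| OStationary (z : R)
| OBase (x : R).

(* Big-step semantics of BinarySearch(x0,x1) for oracle (f, f') and eps.
   [BinSearch f' eps x0 x1 qs z]: the call terminates, returns z, and the
   list qs records (in order) the points queried to the oracle. *)
Inductive BinSearch (f' : R -> R) (eps : R) : R -> R -> list R -> R -> Prop :=
| BS_stat : forall x0 x1,
    Rabs (f' ((x0 + x1) / 2)) < eps ->
    BinSearch f' eps x0 x1 ((x0 + x1) / 2 :: nil) ((x0 + x1) / 2)
| BS_right : forall x0 x1 qs z,
    ~ (Rabs (f' ((x0 + x1) / 2)) < eps) ->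
    f' ((x0 + x1) / 2) <= - eps ->
    BinSearch f' eps ((x0 + x1) / 2) x1 qs z ->
    BinSearch f' eps x0 x1 ((x0 + x1) / 2 :: qs) z
| BS_left : forall x0 x1 qs z,
    ~ (Rabs (f' ((x0 + x1) / 2)) < eps) ->
    ~ (f' ((x0 + x1) / 2) <= - eps) ->
    f' ((x0 + x1) / 2) > 0 ->
    BinSearch f' eps x0 ((x0 + x1) / 2) qs z ->
    BinSearch f' eps x0 x1 ((x0 + x1) / 2 :: qs) z.

(* Big-step semantics of DecreaseGap(x0); x0 itself is queried (its value
   f(x0) is used), y = x0 + 2/eps is queried. *)
Inductive DecreaseGap (f f' : R -> R) (eps : R) : R -> list R -> outcome -> Prop :=
| DG_stat : forall x0,
    Rabs (f' (x0 + 2 / eps)) < eps ->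
    DecreaseGap f f' eps x0 (x0 :: x0 + 2 / eps :: nil) (OStationary (x0 + 2 / eps))
| DG_bs : forall x0 qs z,
    ~ (Rabs (f' (x0 + 2 / eps)) < eps) ->
    f' (x0 + 2 / eps) > 0 ->
    BinSearch f' eps x0 (x0 + 2 / eps) qs z ->
    DecreaseGap f f' eps x0 (x0 :: x0 + 2 / eps :: qs) (OStationary z)
| DG_base : forall x0,
    ~ (Rabs (f' (x0 + 2 / eps)) < eps) ->
    ~ (f' (x0 + 2 / eps) > 0) ->
    f (x0 + 2 / eps) >= 3 / 4 * f x0 ->
    DecreaseGap f f' eps x0 (x0 :: x0 + 2 / eps :: nil) (OBase x0)
| DG_rec : forall x0 qs o,
    ~ (Rabs (f' (x0 + 2 / eps)) < eps) ->
    ~ (f' (x0 + 2 / eps) > 0) ->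
    ~ (f (x0 + 2 / eps) >= 3 / 4 * f x0) ->
    DecreaseGap f f' eps (x0 + 2 / eps) qs o ->
    DecreaseGap f f' eps x0 (x0 :: x0 + 2 / eps :: qs) o.

(* Number of oracle queries: values at already-queried points are reused,
   so count distinct queried points. *)
Definition num_queries (qs : list R) : nat := length (nodup Req_EM_T qs).

(* While the slope at the probe y = x + 2/eps stays below -eps and f(y) < 3/4 f(x),
   DecreaseGap moves to y, so f shrinks geometrically; since a nonnegative 1-smooth
   function satisfies f'(x)^2 <= 4 f(x), f stays above eps^2/4 along the way, which
   bounds the number of steps by O(log(1/eps)). If the probe has slope >= eps, the
   1-Lipschitz derivative forces every bracketing interval of BinarySearch to have
   length >= 2 eps, so halving the initial length 2/eps ends after O(log(1/eps))
   queries, at an eps-stationary point. Both counts are instances of one induction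
   on a real potential that drops by a fixed amount per step. *)
From Stdlib Require Import Reals Lra Lia List.
Open Scope R_scope.

Lemma ln_le x y : 0 < x -> x <= y -> ln x <= ln y.
Proof.
intros Hx [Hxy | <-]; [left; exact (ln_increasing x y Hx Hxy) | lra].
Qed.

Lemma ln_div x y : 0 < x -> 0 < y -> ln (x / y) = ln x - ln y.
Proof.
intros Hx Hy; unfold Rdiv.
rewrite ln_mult, ln_Rinv; [ring | exact Hy | exact Hx | now apply Rinv_0_lt_compat].
Qed.

Lemma ln_le_sub1 x : 0 < x -> ln x <= x - 1.
Proof. intros Hx; pose proof (exp_ineq1_le (ln x)); rewrite exp_ln in *; lra. Qed.

Lemma ln_inv_ge0 x : 0 < x <= 1 -> 0 <= ln (1 / x).
Proof.
intros Hx; rewrite ln_div, ln_1 by lra; pose proof (ln_le x 1 ltac:(lra) ltac:(lra)).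
rewrite ln_1 in *; lra.
Qed.

Lemma Rdiv_le_compat_l a b c : 0 <= a -> 0 < c -> c <= b -> a / b <= a / c.
Proof.
intros Ha Hc Hcb; apply Rmult_le_compat_l; [exact Ha|].
apply Rinv_le_contravar; assumption.
Qed.

Lemma Rdiv_le_sub1 a b d : 0 < d -> a <= b - d -> a / d <= b / d - 1.
Proof.
intros Hd Hab; replace (b / d - 1) with ((b - d) / d) by (field; lra).
apply Rmult_le_compat_r; [left; apply Rinv_0_lt_compat|]; lra.
Qed.

Lemma length_nodup_le {A : Type} (dec : forall x y : A, {x = y} + {x <> y}) (l : list A) :
  (length (nodup dec l) <= length l)%nat.
Proof.
induction l as [|a l IH]; simpl; [lia|].
destruct (in_dec dec a l); simpl; lia.
Qed.

Lemma potential_ind {A : Type} (phi : A -> R) (delta : R) (P : A -> Prop) :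
  0 < delta ->
  (forall x, (forall y, 0 <= phi y <= phi x - delta -> P y) -> P x) ->
  forall x, P x.
Proof.
intros Hdelta step.
assert (below : forall n x, phi x < INR n * delta -> P x).
{ induction n as [|n IH]; intros x Hx; apply step; intros y Hy.
  - simpl in Hx; lra.
  - apply IH; rewrite S_INR in Hx; lra. }
intros x; destruct (INR_archimed delta (phi x) Hdelta) as [n Hn].
exact (below n x Hn).
Qed.

Section BinarySearch.

Variables (f' : R -> R) (eps : R).
Hypothesis f'_lipschitz : forall x y, Rabs (f' x - f' y) <= Rabs (x - y).
Hypothesis eps_gt0 : 0 < eps.

Lemma bracket_width a b : a < b -> f' a <= - eps -> eps <= f' b -> 2 * eps <= b - a.
Proof.
intros Hab Ha Hb; specialize (f'_lipschitz b a).
rewrite (Rabs_right (b - a)) in f'_lipschitz by lra.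
pose proof (Rle_abs (f' b - f' a)); lra.
Qed.

Lemma BinSearch_stationary a b :
  a < b -> f' a <= - eps -> eps <= f' b ->
  exists qs z, BinSearch f' eps a b qs z /\ Rabs (f' z) < eps /\
    INR (length qs) <= 1 + (ln (b - a) - ln (2 * eps)) / ln 2.
Proof.
assert (ln2_gt0 : 0 < ln 2) by (pose proof ln_lt_2; lra).
revert a b.
enough (H : forall p : R * R, fst p < snd p -> f' (fst p) <= - eps -> eps <= f' (snd p) ->
  exists qs z, BinSearch f' eps (fst p) (snd p) qs z /\ Rabs (f' z) < eps /\
    INR (length qs) <= 1 + (ln (snd p - fst p) - ln (2 * eps)) / ln 2).
{ intros a b; exact (H (a, b)). }
intros p; pattern p;
  apply (potential_ind (fun p => ln (snd p - fst p) - ln (2 * eps)) (ln 2)); [lra|]; clear p.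
intros [a b] IH Hab Ha Hb; simpl in *.
set (m := (a + b) / 2).
assert (recurse : forall c d, c < d -> f' c <= - eps -> eps <= f' d -> d - c = (b - a) / 2 ->
          exists qs z, BinSearch f' eps c d qs z /\ Rabs (f' z) < eps /\
            INR (length qs) <= (ln (b - a) - ln (2 * eps)) / ln 2).
{ intros c d Hcd Hc Hd Hhalf.
  assert (Hpot : ln (d - c) - ln (2 * eps) = ln (b - a) - ln (2 * eps) - ln 2)
    by (rewrite Hhalf, ln_div by lra; ring).
  pose proof (ln_le _ _ (ltac:(lra) : 0 < 2 * eps) (bracket_width c d Hcd Hc Hd)).
  destruct (IH (c, d)) as [qs [z [Hrun [Hz Hlen]]]]; simpl;
    [lra | exact Hcd | exact Hc | exact Hd |].
  exists qs, z; split; [exact Hrun|]; split; [exact Hz|].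
  simpl in Hlen; pose proof (Rdiv_le_sub1 _ _ _ ln2_gt0 (Req_le _ _ Hpot)); lra. }
destruct (Rlt_dec (Rabs (f' m)) eps) as [Hm | Hm].
- exists (m :: nil), m; split; [now constructor|]; split; [exact Hm|].
  pose proof (ln_le _ _ (ltac:(lra) : 0 < 2 * eps) (bracket_width a b Hab Ha Hb)).
  assert (0 <= (ln (b - a) - ln (2 * eps)) / ln 2)
    by (apply Rle_mult_inv_pos; lra).
  simpl; lra.
- destruct (Rle_dec (f' m) (- eps)) as [Hneg | Hneg].
  + destruct (recurse m b) as [qs [z [Hrun [Hz Hlen]]]];
      [unfold m; lra | exact Hneg | exact Hb | unfold m; field |].
    exists (m :: qs), z; split; [now apply BS_right|]; split; [exact Hz|].
    simpl length; rewrite S_INR; lra.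
  + assert (Hpos : eps <= f' m) by (split_Rabs; lra).
    destruct (recurse a m) as [qs [z [Hrun [Hz Hlen]]]];
      [unfold m; lra | exact Ha | exact Hpos | unfold m; field |].
    exists (m :: qs), z; split; [|split; [exact Hz|]].
    { apply BS_left; [exact Hm | exact Hneg | fold m; lra | exact Hrun]. }
    simpl length; rewrite S_INR; lra.
Qed.

Lemma BinSearch_probe_stationary x :
  f' x <= - eps -> eps <= f' (x + 2 / eps) ->
  exists qs z, BinSearch f' eps x (x + 2 / eps) qs z /\ Rabs (f' z) < eps /\
    INR (length qs) <= 1 + 2 * ln (1 / eps) / ln 2.
Proof.
intros Hx Hy.
assert (Hwidth : ln (x + 2 / eps - x) - ln (2 * eps) = 2 * ln (1 / eps)).
{ replace (x + 2 / eps - x) with (2 / eps) by ring.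
  rewrite !ln_div, ln_mult, ln_1 by lra; ring. }
rewrite <- Hwidth; apply BinSearch_stationary; [|exact Hx | exact Hy].
assert (0 < 2 / eps) by (apply Rdiv_lt_0_compat; lra); lra.
Qed.

End BinarySearch.

Definition decrease_gap_spec (f f' : R -> R) (eps x : R) (o : outcome) : Prop :=
  match o with
  | OStationary z => Rabs (f' z) < eps
  | OBase x' => f x' <= f x /\ f' x' <= - eps /\ f (x' + 2 / eps) >= 3 / 4 * f x'
  end.

Section DecreaseGapAnalysis.

Variables (f f' : R -> R) (eps : R).
Hypothesis f_smooth : one_smooth f f'.
Hypothesis f_ge0 : forall x, 0 <= f x.
Hypothesis eps_bounds : 0 < eps <= 1.

(* One gradient step of length -f'(x)/2 lowers f by at least f'(x)^2/4, and f >= 0. *)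
Lemma deriv_sq_le_value x : f' x <= 0 -> f' x ^ 2 <= 4 * f x.
Proof.
destruct f_smooth as [f_deriv f'_lipschitz]; intros Hx.
destruct (Req_dec (f' x) 0) as [-> | Hx0]; [specialize (f_ge0 x); nra|].
set (d := - f' x / 2).
destruct (MVT_cor2 f f' x (x + d)) as [c [Hmvt Hc]]; [unfold d; lra | intros; apply f_deriv|].
assert (Hslope : f' c <= f' x + d).
{ specialize (f'_lipschitz c x); rewrite (Rabs_right (c - x)) in f'_lipschitz by lra.
  pose proof (Rle_abs (f' c - f' x)); lra. }
replace (x + d - x) with d in Hmvt by ring.
assert (f (x + d) - f x <= (f' x + d) * d)
  by (rewrite Hmvt; apply Rmult_le_compat_r; [unfold d; lra | exact Hslope]).
specialize (f_ge0 (x + d)); unfold d in *; nra.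
Qed.

Lemma descent_value_ge x : f' x <= - eps -> eps ^ 2 / 4 <= f x.
Proof. intros Hx; pose proof (deriv_sq_le_value x ltac:(lra)); nra. Qed.

Lemma DecreaseGap_correct x : f' x <= - eps ->
  exists qs o, DecreaseGap f f' eps x qs o /\
    INR (length qs) <= 3 + 2 * ln (1 / eps) / ln 2
                         + 2 * ((ln (f x) - ln (eps ^ 2 / 4)) / ln (4 / 3)) /\
    decrease_gap_spec f f' eps x o.
Proof.
pose proof ln_lt_2 as ln2_gt.
assert (ln43_gt0 : 0 < ln (4 / 3)) by (rewrite <- ln_1; apply ln_increasing; lra).
assert (eps_sq_gt0 : 0 < eps ^ 2 / 4) by nra.
assert (potential_ge0 : forall u, f' u <= - eps -> 0 <= ln (f u) - ln (eps ^ 2 / 4)).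
{ intros u Hu; pose proof (ln_le _ _ eps_sq_gt0 (descent_value_ge u Hu)); lra. }
assert (bs_term_ge0 : 0 <= 2 * ln (1 / eps) / ln 2)
  by (apply Rle_mult_inv_pos; [pose proof (ln_inv_ge0 eps eps_bounds)|]; lra).
pattern x; apply (potential_ind (fun u => ln (f u) - ln (eps ^ 2 / 4)) (ln (4 / 3)));
  [lra|]; clear x; intros x IH Hx.
assert (gap_term_ge0 : 0 <= (ln (f x) - ln (eps ^ 2 / 4)) / ln (4 / 3))
  by (apply Rle_mult_inv_pos; [pose proof (potential_ge0 x Hx)|]; lra).
set (y := x + 2 / eps).
destruct (Rlt_dec (Rabs (f' y)) eps) as [Hstat | Hstat].
{ exists (x :: y :: nil), (OStationary y); split; [now constructor|].
  split; [simpl length; rewrite !S_INR, INR_0; lra | exact Hstat]. }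
destruct (Rgt_dec (f' y) 0) as [Hpos | Hpos].
{ destruct (BinSearch_probe_stationary f' eps (proj2 f_smooth) (proj1 eps_bounds) x)
    as [qs [z [Hrun [Hz Hlen]]]]; [exact Hx | fold y; split_Rabs; lra |].
  exists (x :: y :: qs), (OStationary z); split; [now apply DG_bs|].
  split; [simpl length; rewrite !S_INR; lra | exact Hz]. }
assert (Hy : f' y <= - eps) by (split_Rabs; lra).
destruct (Rge_dec (f y) (3 / 4 * f x)) as [Hbase | Hbase].
{ exists (x :: y :: nil), (OBase x); split; [now apply DG_base|].
  split; [simpl length; rewrite !S_INR, INR_0; lra|].
  repeat split; [lra | exact Hx | exact Hbase]. }
assert (Hdrop : ln (f y) <= ln (f x) - ln (4 / 3)).
{ replace (ln (f x) - ln (4 / 3)) with (ln (f x / (4 / 3))) by (apply ln_div; [|lra];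
    pose proof (descent_value_ge x Hx); lra).
  apply ln_le; [pose proof (descent_value_ge y Hy); lra | lra]. }
destruct (IH y) as [qs [o [Hrun [Hlen Hspec]]]];
  [split; [now apply potential_ge0 | lra] | exact Hy |].
exists (x :: y :: qs), o; split; [now apply DG_rec|]; split.
- pose proof (Rdiv_le_sub1 _ _ _ ln43_gt0 (ltac:(lra) :
    ln (f y) - ln (eps ^ 2 / 4) <= ln (f x) - ln (eps ^ 2 / 4) - ln (4 / 3))).
  simpl length; rewrite !S_INR; lra.
- destruct o as [z | x']; [exact Hspec|].
  destruct Hspec as [Hle Hrest]; split; [|exact Hrest].
  pose proof (f_ge0 x); apply Rnot_ge_lt in Hbase; lra.
Qed.

End DecreaseGapAnalysis.

Lemma query_bound_le eps v : 0 < eps <= 1 -> eps ^ 2 / 4 <= v <= 1 ->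
  3 + 2 * ln (1 / eps) / ln 2 + 2 * ((ln v - ln (eps ^ 2 / 4)) / ln (4 / 3))
  <= 20 * (1 + ln (1 / eps)).
Proof.
intros Heps Hv.
assert (eps_sq_gt0 : 0 < eps ^ 2 / 4) by nra.
pose proof ln_lt_2 as ln2_gt.
pose proof (ln_inv_ge0 eps Heps) as L_ge0.
assert (ln2_le1 : ln 2 <= 1) by (pose proof (ln_le_sub1 2); lra).
assert (ln43_ge : / 4 <= ln (4 / 3)).
{ pose proof (ln_le_sub1 (3 / 4)); rewrite !ln_div in * by lra; lra. }
assert (Hv_ln : ln v <= 0) by (rewrite <- ln_1; apply ln_le; lra).
assert (Heps_ln : ln (eps ^ 2 / 4) = - 2 * ln (1 / eps) - 2 * ln 2).
{ replace 4 with (2 ^ 2) by ring.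
  rewrite !ln_div, !ln_pow, ln_1 by (try apply pow_lt; lra); simpl; ring. }
assert (2 * ln (1 / eps) / ln 2 <= 2 * ln (1 / eps) / / 2)
  by (apply Rdiv_le_compat_l; lra).
assert ((ln v - ln (eps ^ 2 / 4)) / ln (4 / 3) <= (ln (1 / eps) * 2 + 2) / / 4).
{ apply Rle_trans with ((ln v - ln (eps ^ 2 / 4)) / / 4);
    [apply Rdiv_le_compat_l; [pose proof (ln_le _ _ eps_sq_gt0 (proj1 Hv))|..]; lra |].
  apply Rmult_le_compat_r; lra. }
replace (2 * ln (1 / eps) / / 2) with (4 * ln (1 / eps)) in * by field.
replace ((ln (1 / eps) * 2 + 2) / / 4) with (8 * ln (1 / eps) + 8) in * by field.
lra.
Qed.

Theorem lemmaA7 :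
  exists C : R, C > 0 /\
  forall (eps : R) (f f' : R -> R) (x0 : R),
    0 < eps < 1 ->
    one_smooth f f' ->
    (forall x, 0 <= f x) ->
    f x0 <= 1 ->
    f' x0 <= - eps ->
    exists (qs : list R) (o : outcome),
      DecreaseGap f f' eps x0 qs o /\
      INR (num_queries qs) <= C * (1 + ln (1 / eps)) /\
      match o with
      | OStationary z => Rabs (f' z) < eps
      | OBase x => f x <= f x0 /\ f' x <= - eps /\ f (x + 2 / eps) >= 3 / 4 * f x
      end.
Proof.
exists 20; split; [lra|].
intros eps f f' x0 Heps Hsmooth Hf Hfx0 Hx0.
assert (Heps' : 0 < eps <= 1) by lra.
destruct (DecreaseGap_correct f f' eps Hsmooth Hf Heps' x0 Hx0) as [qs [o [Hrun [Hlen Hspec]]]].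
exists qs, o; split; [exact Hrun|]; split; [|exact Hspec].
pose proof (le_INR _ _ (length_nodup_le Req_EM_T qs)).
pose proof (descent_value_ge f f' eps Hsmooth Hf Heps' x0 Hx0).
pose proof (query_bound_le eps (f x0) Heps' ltac:(lra)).
unfold num_queries; lra.
Qed.
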